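(* In the discrete torus model with frame group $\mathbb{Z}_4$ and the 2-dimensional calculus $\mathcal C=\{\bar1,\bar3\}$ (context), the torsion-free and cotorsion-free spin connections are exactly \[A_{\bar1}=(-\alpha-\tfrac{s_1}{2})e_1+(\beta-\tfrac{s_2}{2})e_2,\qquad A_{\bar3}=(\beta-\tfrac{s_1}{2})e_1+(\alpha-\tfrac{s_2}{2})e_2,\] for functions $\alpha,\beta$ such that $a=\alpha+\beta$, $b=\beta-\alpha$ satisfy $(R_1+R_2)a=0=(R_1+R_2)b$, where $s_1=\bar\partial^2\Theta_1$, $s_2=\bar\partial^1\Theta_2$. Their covariant derivative is \[\nabla e_1=(b-s_1)e_1\otimes e_1+a\,e_1\otimes e_2+(a-s_2)e_2\otimes e_1-b\,e_2\otimes e_2,\] \[\nabla e_2=-a\,e_1\otimes e_1+(b-s_1)e_1\otimes e_2+b\,e_2\otimes e_1+(a-s_2)e_2\otimes e_2,\] and such a connection is regular if and only if $s_1\,\bar\partial^2a-s_2\,\bar\partial^1b=0$.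
   Context: Discrete torus model: $\Sigma=\mathbb{Z}_2\times\mathbb{Z}_2$, $x\to y$ iff $y-x\in\{(1,0),(0,1)\}$; diagonal zweibein $e_{1,x,x+(1,0)}=\Theta_1(x)^{-1}$, $e_{2,x,x+(0,1)}=\Theta_2(x)^{-1}$, $\Theta_a$ nowhere-vanishing with $\Theta_1R_1\Theta_2=\Theta_2R_2\Theta_1$; $R_1f(x)=f(x+(1,0))$, $R_2f(x)=f(x+(0,1))$, $\bar\partial^a=R_a-\mathrm{id}$; $e_af=R_a(f)e_a$, $\mathrm{d}f=\sum_a(\bar\partial^af)\Theta_ae_a$; two-forms $e_1\wedge e_2=-e_2\wedge e_1$, $e_a\wedge e_a=0$; $\mathrm{d}e_1=(\bar\partial^1\Theta_2)e_1\wedge e_2$, $\mathrm{d}e_2=-(\bar\partial^2\Theta_1)e_1\wedge e_2$. Frame group $\mathbb{Z}_4$ acting by quarter rotations ($\bar1$: $e_1\mapsto e_2$, $e_2\mapsto-e_1$), calculus $\mathcal C=\{\bar1,\bar3\}$; $f^{\bar1}\triangleright e_1=e_2-e_1$, $f^{\bar1}\triangleright e_2=-e_1-e_2$, $f^{\bar3}\triangleright e_1=-e_1-e_2$, $f^{\bar3}\triangleright e_2=e_1-e_2$. Spin connection: 1-forms $A_{\bar1},A_{\bar3}$. Torsion-free: $\mathrm{d}e_a+\sum_iA_i\wedge(f^i\triangleright e_a)=0$; cotorsion-free: $\mathrm{d}e_a+(f^{\bar3}\triangleright e_a)\wedge A_{\bar1}+(f^{\bar1}\triangleright e_a)\wedge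 A_{\bar3}=0$; regular: $A_{\bar1}\wedge A_{\bar1}+A_{\bar3}\wedge A_{\bar3}=0$. Covariant derivative $\nabla(\sum\alpha^ae_a)=\sum\mathrm{d}\alpha^a\otimes e_a-\sum_{i,a}\alpha^aA_i\otimes f^i\triangleright e_a$. *)

From HB Require Import structures.
From mathcomp Require Import all_boot all_order all_algebra.
Set Implicit Arguments. Unset Strict Implicit. Unset Printing Implicit Defensive.
Import Order.TTheory GRing.Theory Num.Theory.
Local Open Scope ring_scope.

Definition pt := ('Z_2 * 'Z_2)%type.
Definition dir1 : pt := (1, 0).
Definition dir2 : pt := (0, 1).

Section Torus.
Variable K : fieldType.

Definition fn := pt -> K.

Definition R1 (f : fn) : fn := fun x => f (x + dir1).
Definition R2 (f : fn) : fn := fun x => f (x + dir2).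
Definition Ra (a : 'I_2) (f : fn) : fn := if a == 0 then R1 f else R2 f.
Definition dbar1 (f : fn) : fn := fun x => R1 f x - f x.
Definition dbar2 (f : fn) : fn := fun x => R2 f x - f x.

(* A 1-form sum_a om_a e_a (coefficients written on the left),
   stored as its coefficient family a |-> om_a. *)
Definition form1 := 'I_2 -> fn.
Definition e1 : form1 := fun a _ => if a == 0 then 1 else 0.
Definition e2 : form1 := fun a _ => if a == 0 then 0 else 1.
Definition mkform1 (w1 w2 : fn) : form1 := fun a => if a == 0 then w1 else w2.

Definition addf1 (w v : form1) : form1 := fun a x => w a x + v a x.
Definition oppf1 (w : form1) : form1 := fun a x => - w a x.
Definition lmulf1 (f : fn) (w : form1) : form1 := fun a x => f x * w a x.

(* A 2-form  c e_1/\e_2, stored as the coefficient c. *)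
Definition form2 := fn.

(* Wedge product, using e_a f = R_a(f) e_a, e_a/\e_a = 0, e_2/\e_1 = - e_1/\e_2:
   (w1 e1 + w2 e2) /\ (v1 e1 + v2 e2) = (w1 R1(v2) - w2 R2(v1)) e1/\e2. *)
Definition wedge (w v : form1) : form2 :=
  fun x => w 0 x * R1 (v 1) x - w 1 x * R2 (v 0) x.

Definition dfn (Th1 Th2 : fn) (f : fn) : form1 :=
  mkform1 (fun x => dbar1 f x * Th1 x) (fun x => dbar2 f x * Th2 x).

Definition de1 (Th1 Th2 : fn) : form2 := dbar1 Th2.
Definition de2 (Th1 Th2 : fn) : form2 := fun x => - dbar2 Th1 x.
Definition de (Th1 Th2 : fn) (a : 'I_2) : form2 :=
  if a == 0 then de1 Th1 Th2 else de2 Th1 Th2.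

Definition d1 (Th1 Th2 : fn) (w : form1) : form2 :=
  fun x => \sum_(a < 2) (wedge (dfn Th1 Th2 (w a)) (if a == 0 then e1 else e2) x
                         + w a x * de Th1 Th2 a x).

(* Frame group Z_4 acting by quarter rotations:
   1 : e1 |-> e2, e2 |-> -e1 (on constant coefficients, i.e. left linearly). *)
Definition rot1 (w : form1) : form1 := mkform1 (fun x => - w 1 x) (w 0).
Definition rot (g : 'Z_4) (w : form1) : form1 := iter (g : nat) rot1 w.
(* f^g |> v = g.v - v  (this gives f^1|>e1 = e2-e1, f^1|>e2 = -e1-e2,
   f^3|>e1 = -e1-e2, f^3|>e2 = e1-e2, as in the paper). *)
Definition fact (g : 'Z_4) (w : form1) : form1 := addf1 (rot g w) (oppf1 w).

Definition basis (a : 'I_2) : form1 := if a == 0 then e1 else e2.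

Definition torsion_free (Th1 Th2 : fn) (A1 A3 : form1) : Prop :=
  forall a : 'I_2, forall x,
    de Th1 Th2 a x + wedge A1 (fact 1 (basis a)) x + wedge A3 (fact 3 (basis a)) x = 0.

Definition cotorsion_free (Th1 Th2 : fn) (A1 A3 : form1) : Prop :=
  forall a : 'I_2, forall x,
    de Th1 Th2 a x + wedge (fact 3 (basis a)) A1 x + wedge (fact 1 (basis a)) A3 x = 0.

Definition regular (A1 A3 : form1) : Prop :=
  forall x, wedge A1 A1 x + wedge A3 A3 x = 0.

(* Tensor products Omega^1 (x)_A Omega^1: sum_{a,b} c_{ab} e_a (x) e_b,
   stored as (a, b) |-> c_{ab}. *)
Definition form11 := 'I_2 -> 'I_2 -> fn.
Definition tens (w v : form1) : form11 := fun a b x => w a x * Ra a (v b) x.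
Definition add11 (t u : form11) : form11 := fun a b x => t a b x + u a b x.
Definition opp11 (t : form11) : form11 := fun a b x => - t a b x.
Definition zero11 : form11 := fun _ _ _ => 0.

Definition nabla (Th1 Th2 : fn) (A1 A3 : form1) (w : form1) : form11 :=
  \big[add11/zero11]_(a < 2)
    add11 (tens (dfn Th1 Th2 (w a)) (basis a))
          (opp11 (add11 (tens (lmulf1 (w a) A1) (fact 1 (basis a)))
                        (tens (lmulf1 (w a) A3) (fact 3 (basis a))))).

Definition mkform11 (c11 c12 c21 c22 : fn) : form11 :=
  fun a b => if a == 0 then (if b == 0 then c11 else c12)
             else (if b == 0 then c21 else c22).

End Torus.

From Pilot Require Import Defs.
From HB Require Import structures.
From mathcomp Require Import all_boot all_order all_algebra.
From mathcomp Require Import ring.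
From Stdlib Require Import FunctionalExtensionality.
Import Order.TTheory GRing.Theory Num.Theory.
Local Open Scope ring_scope.

(* Since every point of Sigma has order 2, s1 and s2 change sign under R2 and
   R1 respectively.  The two torsion equations express A_1bar through A_3bar
   (this needs 2 != 0); parametrising A_3bar by alpha and beta, the cotorsion
   equations become (R1 + R2) a = 0 = (R1 + R2) b, i.e. R1 alpha = - R2 alpha
   and R1 beta = - R2 beta.  Substituting the latter into the curvature
   2-form A_1bar /\ A_1bar + A_3bar /\ A_3bar leaves (s1 dbar^2 a - s2 dbar^1 b) / 2. *)

Lemma pt_addKr (x v : pt) : x + v + v = x.
Proof.
have v_add_v : v + v = 0.
  by case: v => [[[|[|//]] ?] [[|[|//]] ?]]; apply/eqP.
by rewrite -addrA v_add_v addr0.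
Qed.

Lemma forall_ord2 (P : 'I_2 -> Prop) : P 0 -> P 1 -> forall a, P a.
Proof.
move=> P0 P1 [[|[|//]] lt_a2];
  [rewrite (_ : Ordinal lt_a2 = 0) | rewrite (_ : Ordinal lt_a2 = 1)] => //;
  exact: val_inj.
Qed.

Lemma eq0_lincomb2 {K : nzRingType} {X l1 l2 : K} (c1 c2 : K) :
  l1 = 0 -> l2 = 0 -> X = c1 * l1 + c2 * l2 -> X = 0.
Proof. by move=> -> -> ->; rewrite !mulr0 addr0. Qed.

Section TorusConnections.
Variables (K : fieldType) (Th1 Th2 : fn K).

Lemma form1_ext (w v : form1 K) : (forall a x, w a x = v a x) -> w = v.
Proof.
by move=> wv; do 2 apply: functional_extensionality => ?; apply: wv.
Qed.

Lemma form11_ext (t u : form11 K) : (forall a b x, t a b x = u a b x) -> t = u.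
Proof.
by move=> tu; do 3 apply: functional_extensionality => ?; apply: tu.
Qed.

Local Notation s1 := (dbar2 Th1).
Local Notation s2 := (dbar1 Th2).

Lemma dbar1_shift (f : fn K) x : dbar1 f (x + dir1) = - dbar1 f x.
Proof. by rewrite /dbar1 /R1 pt_addKr opprB. Qed.

Lemma dbar2_shift (f : fn K) x : dbar2 f (x + dir2) = - dbar2 f x.
Proof. by rewrite /dbar2 /R2 pt_addKr opprB. Qed.

Lemma torsion_free_pointwise (A1 A3 : form1 K) :
  torsion_free Th1 Th2 A1 A3 <->
  forall x, s2 x + A1 0 x + A1 1 x - A3 0 x + A3 1 x = 0 /\
            - s1 x - A1 0 x + A1 1 x - A3 0 x - A3 1 x = 0.
Proof.
have E a x : de Th1 Th2 a x + wedge A1 (fact 1 (basis K a)) x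
                            + wedge A3 (fact 3 (basis K a)) x =
    if a == 0 then s2 x + A1 0 x + A1 1 x - A3 0 x + A3 1 x
    else - s1 x - A1 0 x + A1 1 x - A3 0 x - A3 1 x.
  by move: a; apply: forall_ord2;
    rewrite /= /de /de1 /de2 /wedge /fact /Defs.rot /rot1 /addf1 /oppf1
            /mkform1 /basis /e1 /e2 /R1 /R2 /=; ring.
split=> [tf x | tf]; first by split; [move: (E 0 x) | move: (E 1 x)]; rewrite tf => /esym.
by apply: forall_ord2 => x; rewrite E /=; case: (tf x).
Qed.

Lemma cotorsion_free_pointwise (A1 A3 : form1 K) :
  cotorsion_free Th1 Th2 A1 A3 <->
  forall x,
    s2 x - A1 1 (x + dir1) + A1 0 (x + dir2)
         - A3 1 (x + dir1) - A3 0 (x + dir2) = 0 /\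
    - s1 x + A1 1 (x + dir1) + A1 0 (x + dir2)
           - A3 1 (x + dir1) + A3 0 (x + dir2) = 0.
Proof.
have E a x : de Th1 Th2 a x + wedge (fact 3 (basis K a)) A1 x
                            + wedge (fact 1 (basis K a)) A3 x =
    if a == 0 then s2 x - A1 1 (x + dir1) + A1 0 (x + dir2)
                        - A3 1 (x + dir1) - A3 0 (x + dir2)
    else - s1 x + A1 1 (x + dir1) + A1 0 (x + dir2)
                - A3 1 (x + dir1) + A3 0 (x + dir2).
  by move: a; apply: forall_ord2;
    rewrite /= /de /de1 /de2 /wedge /fact /Defs.rot /rot1 /addf1 /oppf1
            /mkform1 /basis /e1 /e2 /R1 /R2 /=; ring.
split=> [ctf x | ctf]; first by split; [move: (E 0 x) | move: (E 1 x)]; rewrite ctf => /esym.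
by apply: forall_ord2 => x; rewrite E /=; case: (ctf x).
Qed.

Definition spin1 (al be : fn K) : form1 K :=
  mkform1 (fun x => - al x - s1 x / 2%:R) (fun x => be x - s2 x / 2%:R).

Definition spin3 (al be : fn K) : form1 K :=
  mkform1 (fun x => be x - s1 x / 2%:R) (fun x => al x - s2 x / 2%:R).

Definition admissible (al be : fn K) : Prop :=
  (forall x, R1 (fun y => al y + be y) x + R2 (fun y => al y + be y) x = 0) /\
  (forall x, R1 (fun y => be y - al y) x + R2 (fun y => be y - al y) x = 0).

Hypothesis two_neq0 : (2%:R : K) != 0.

Lemma torsion_free_spin (al be : fn K) :
  torsion_free Th1 Th2 (spin1 al be) (spin3 al be).
Proof.
by apply/torsion_free_pointwise => x; rewrite /spin1 /spin3 /mkform1 /=;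
  split; field.
Qed.

Lemma torsion_free_spinP (A1 A3 : form1 K) :
  torsion_free Th1 Th2 A1 A3 ->
  exists al be, A1 = spin1 al be /\ A3 = spin3 al be.
Proof.
move/torsion_free_pointwise => tf.
exists (fun x => A3 1 x + s2 x / 2%:R), (fun x => A3 0 x + s1 x / 2%:R).
split; apply: form1_ext; apply: forall_ord2 => x; rewrite /spin1 /spin3 /mkform1 /=;
  try by field.
- have [T1 T2] := tf x; apply/subr0_eq.
  by apply: (eq0_lincomb2 (1 / 2%:R) (-1 / 2%:R) T1 T2); field.
- have [T1 T2] := tf x; apply/subr0_eq.
  by apply: (eq0_lincomb2 (1 / 2%:R) (1 / 2%:R) T1 T2); field.
Qed.

Lemma cotorsion_free_spinP (al be : fn K) :
  cotorsion_free Th1 Th2 (spin1 al be) (spin3 al be) <-> admissible al be.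
Proof.
rewrite cotorsion_free_pointwise /admissible.
have E1 x : s2 x - spin1 al be 1 (x + dir1) + spin1 al be 0 (x + dir2)
                 - spin3 al be 1 (x + dir1) - spin3 al be 0 (x + dir2) =
            - (R1 (fun y => al y + be y) x + R2 (fun y => al y + be y) x).
  by rewrite /spin1 /spin3 /mkform1 /R1 /R2 /= dbar1_shift; field.
have E2 x : - s1 x + spin1 al be 1 (x + dir1) + spin1 al be 0 (x + dir2)
                   - spin3 al be 1 (x + dir1) + spin3 al be 0 (x + dir2) =
            R1 (fun y => be y - al y) x + R2 (fun y => be y - al y) x.
  by rewrite /spin1 /spin3 /mkform1 /R1 /R2 /= dbar2_shift; field.
split=> [ctf | [Ua Ub] x]; last by rewrite E1 E2 Ua Ub oppr0; split.
by split=> x; have [C1 C2] := ctf x; [apply/eqP; rewrite -oppr_eq0 -E1 C1 | rewrite -E2].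
Qed.

Lemma admissible_shift (al be : fn K) :
  admissible al be ->
  forall x, al (x + dir1) = - al (x + dir2) /\ be (x + dir1) = - be (x + dir2).
Proof.
move=> [Ua Ub] x; have := Ua x; have := Ub x; rewrite /R1 /R2 /= => Vx Ux.
split; apply/subr0_eq.
- apply: (eq0_lincomb2 (1 / 2%:R) (-1 / 2%:R) Ux Vx); by field.
- apply: (eq0_lincomb2 (1 / 2%:R) (1 / 2%:R) Ux Vx); by field.
Qed.

Lemma nabla_e1_spin (al be : fn K) :
  nabla Th1 Th2 (spin1 al be) (spin3 al be) (e1 K) =
  mkform11 (fun x => be x - al x - s1 x) (fun x => al x + be x)
           (fun x => al x + be x - s2 x) (fun x => - (be x - al x)).
Proof.
rewrite /nabla !big_ord_recl big_ord0.
by apply: form11_ext; apply: forall_ord2; apply: forall_ord2 => x;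
  rewrite /add11 /opp11 /tens /lmulf1 /dfn /fact /Defs.rot /addf1 /oppf1 /rot1
          /spin1 /spin3 /mkform1 /basis /e1 /e2 /Ra /dbar1 /dbar2 /R1 /R2
          /zero11 /mkform11 /=; field.
Qed.

Lemma nabla_e2_spin (al be : fn K) :
  nabla Th1 Th2 (spin1 al be) (spin3 al be) (e2 K) =
  mkform11 (fun x => - (al x + be x)) (fun x => be x - al x - s1 x)
           (fun x => be x - al x) (fun x => al x + be x - s2 x).
Proof.
rewrite /nabla !big_ord_recl big_ord0.
by apply: form11_ext; apply: forall_ord2; apply: forall_ord2 => x;
  rewrite /add11 /opp11 /tens /lmulf1 /dfn /fact /Defs.rot /addf1 /oppf1 /rot1
          /spin1 /spin3 /mkform1 /basis /e1 /e2 /Ra /dbar1 /dbar2 /R1 /R2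
          /zero11 /mkform11 /=; field.
Qed.

Lemma curvature_spin (al be : fn K) : admissible al be -> forall x,
  wedge (spin1 al be) (spin1 al be) x + wedge (spin3 al be) (spin3 al be) x =
  (s1 x * dbar2 (fun y => al y + be y) x
   - s2 x * dbar1 (fun y => be y - al y) x) / 2%:R.
Proof.
move=> /admissible_shift adm x; have [al_d1 be_d1] := adm x.
rewrite /wedge /spin1 /spin3 /mkform1 /R1 /R2 /= dbar1_shift dbar2_shift.
by rewrite /dbar1 /dbar2 /R1 /R2 al_d1 be_d1; field.
Qed.

Lemma regular_spinP (al be : fn K) : admissible al be ->
  regular (spin1 al be) (spin3 al be) <->
  forall x, s1 x * dbar2 (fun y => al y + be y) x
            - s2 x * dbar1 (fun y => be y - al y) x = 0.
Proof.
move=> adm; rewrite /regular.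
split=> reg x; have := reg x; rewrite curvature_spin //.
  by move/eqP; rewrite mulf_eq0 invr_eq0 (negPf two_neq0) orbF => /eqP.
by move->; rewrite mul0r.
Qed.

Lemma torsion_cotorsion_freeP (A1 A3 : form1 K) :
  torsion_free Th1 Th2 A1 A3 /\ cotorsion_free Th1 Th2 A1 A3 <->
  exists al be, admissible al be /\ A1 = spin1 al be /\ A3 = spin3 al be.
Proof.
split=> [[/torsion_free_spinP [al [be [-> ->]]] /cotorsion_free_spinP adm] |
         [al [be [adm [-> ->]]]]].
  by exists al, be.
by split; [apply: torsion_free_spin | apply/cotorsion_free_spinP].
Qed.

End TorusConnections.

Theorem proposition4p5 (K : fieldType) (two_neq0 : (2%:R : K) != 0)
  (Th1 Th2 : fn K)
  (hTh1 : forall x, Th1 x != 0) (hTh2 : forall x, Th2 x != 0)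
  (hTh : forall x, Th1 x * R1 Th2 x = Th2 x * R2 Th1 x) :
  let s1 := dbar2 Th1 in
  let s2 := dbar1 Th2 in
  let A1of (al be : fn K) := mkform1 (fun x => - al x - s1 x / 2%:R)
                                     (fun x => be x - s2 x / 2%:R) in
  let A3of (al be : fn K) := mkform1 (fun x => be x - s1 x / 2%:R)
                                     (fun x => al x - s2 x / 2%:R) in
  let adm (al be : fn K) :=
    (forall x, R1 (fun y => al y + be y) x + R2 (fun y => al y + be y) x = 0) /\
    (forall x, R1 (fun y => be y - al y) x + R2 (fun y => be y - al y) x = 0) in
  (* classification of torsion-free and cotorsion-free spin connections *)
  (forall A1 A3 : form1 K,
     torsion_free Th1 Th2 A1 A3 /\ cotorsion_free Th1 Th2 A1 A3 <->
     exists al be : fn K, adm al be /\ A1 = A1of al be /\ A3 = A3of al be) /\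
  (forall al be : fn K, adm al be ->
     let a := fun x => al x + be x in
     let b := fun x => be x - al x in
     let A1 := A1of al be in
     let A3 := A3of al be in
     (* covariant derivative *)
     nabla Th1 Th2 A1 A3 (e1 K) =
       mkform11 (fun x => b x - s1 x) a (fun x => a x - s2 x) (fun x => - b x) /\
     nabla Th1 Th2 A1 A3 (e2 K) =
       mkform11 (fun x => - a x) (fun x => b x - s1 x) b (fun x => a x - s2 x) /\
     (* regularity *)
     (regular A1 A3 <-> forall x, s1 x * dbar2 a x - s2 x * dbar1 b x = 0)).
Proof.
move=> s1 s2 A1of A3of adm.
split=> [A1 A3 | al be adm_ab a b A1 A3].
  exact: torsion_cotorsion_freeP.
split; [exact: nabla_e1_spin | split; [exact: nabla_e2_spin |]].
exact: regular_spinP adm_ab.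
Qed.
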